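(* Let $V$ be a vertex operator algebra of CFT type and $M=\bigoplus_{n\ge0}M(n)$ an admissible $V$-module which is strongly generated by a homogeneous subspace $W\subseteq M$. Then $M/C_2(M)$ is generated, as a module over the commutative algebra $V/C_2(V)$, by $\{w+C_2(M):w\in W\}$.
   Context: $V_0=\mathbb{C}\mathbf{1}$, $V_+=\bigoplus_{n\ge1}V_n$; $Y_M(a,z)=\sum_na_nz^{-n-1}$. $C_2(V)=\mathrm{span}\{a_{-2}b:a,b\in V\}$, $C_2(M)=\mathrm{span}\{a_{-2}v:a\in V,v\in M\}$; $V/C_2(V)$ is a commutative algebra with product $(a+C_2(V))(b+C_2(V))=a_{-1}b+C_2(V)$, and $M/C_2(M)$ is a $V/C_2(V)$-module via $(a+C_2(V)).(v+C_2(M))=a_{-1}v+C_2(M)$. $M$ is strongly generated by $W$ if $M$ is spanned by $a^1_{-n_1}\cdots a^k_{-n_k}w$ with $k\ge0$, $a^i\in V_+$ homogeneous, $n_i\ge1$, $w\in W$. *)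

From HB Require Import structures.
From mathcomp Require Import all_boot all_order all_algebra.
From mathcomp Require Import reals complex.
Set Implicit Arguments. Unset Strict Implicit. Unset Printing Implicit Defensive.
Import Order.TTheory GRing.Theory Num.Theory.
Local Open Scope ring_scope.

Section VOADefs.
Variable K : fieldType.

Definition gbinom (n : int) (i : nat) : K :=
  (\prod_(j < i) (n - (j : nat)%:Z)%:~R) / (i`!)%:R.

Definition in_span (U : lmodType K) (S : U -> Prop) (x : U) : Prop :=
  exists (k : nat) (c : 'I_k -> K) (s : 'I_k -> U),
    (forall i, S (s i)) /\ x = \sum_(i < k) c i *: s i.

Definition subspace (U : lmodType K) (S : U -> Prop) : Prop :=
  [/\ S 0, (forall x y, S x -> S y -> S (x + y)) & (forall c x, S x -> S (c *: x))].

(* Y a n u = a_n u  (the coefficient of z^{-n-1} in Y(a,z)u) *)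
Definition modes_bilinear (V U : lmodType K) (Y : V -> int -> U -> U) : Prop :=
  (forall (c : K) a b n u, Y (c *: a + b) n u = c *: Y a n u + Y b n u) /\
  (forall a n (c : K) u w, Y a n (c *: u + w) = c *: Y a n u + Y a n w).

Definition truncation (V U : lmodType K) (Y : V -> int -> U -> U) : Prop :=
  forall a u, exists N : int, forall n, N <= n -> Y a n u = 0.

(* Borcherds identity (equivalent to the Jacobi identity).  All sums are
   finite by truncation; "the truncated sums agree for all large N" is
   exactly the equality of these (finitely supported) infinite sums. *)
Definition borcherds (V U : lmodType K) (YV : V -> int -> V -> V)
    (Y : V -> int -> U -> U) : Prop :=
  forall (a b : V) (u : U) (p q r : int), exists N0 : nat, forall N : nat, (N0 <= N)%N ->
    \sum_(i < N) gbinom p i *: Y (YV a (r + (i : nat)%:Z) b) (p + q - (i : nat)%:Z) u =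
    \sum_(i < N) ((-1) ^+ i * gbinom r i) *:
       (Y a (p + r - (i : nat)%:Z) (Y b (q + (i : nat)%:Z) u)
        - (-1) ^+ (absz r) *: Y b (q + r - (i : nat)%:Z) (Y a (p + (i : nat)%:Z) u)).

(* A vertex operator algebra; L(n) = omega_{n+1}, V_n = L(0)-eigenspace for n *)
Record VOA (V : lmodType K) := {
  Y : V -> int -> V -> V;
  vac : V;
  omega : V;
  central_charge : K;
  Y_bilin : modes_bilinear Y;
  Y_trunc : truncation Y;
  Y_vac : forall n v, Y vac n v = if n == -1 then v else 0;
  Y_create : forall a n, 0 <= n -> Y a n vac = 0;
  Y_create1 : forall a, Y a (-1) vac = a;
  Y_borcherds : borcherds Y Y;
  Y_virasoro : forall (m n : int) v,
    Y omega (m + 1) (Y omega (n + 1) v) - Y omega (n + 1) (Y omega (m + 1) v) =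
    (m - n)%:~R *: Y omega (m + n + 1) v
    + (if m + n == 0 then ((m ^+ 3 - m)%:~R / 12%:R * central_charge) *: v else 0);
  Y_grading : forall v, exists (k : nat) (ws : 'I_k -> int) (vs : 'I_k -> V),
    (forall i, Y omega 1 (vs i) = (ws i)%:~R *: vs i) /\ v = \sum_(i < k) vs i;
  Y_findim : forall n : int, exists (k : nat) (b : 'I_k -> V), forall v,
    Y omega 1 v = n%:~R *: v -> in_span (fun x => exists i, x = b i) v;
  Y_lower : exists N : int, forall (n : int) v, n < N -> Y omega 1 v = n%:~R *: v -> v = 0;
  (* Y(L(-1)a, z) = d/dz Y(a, z) *)
  Y_deriv : forall a n b, Y (Y omega 0 a) n b = - (n%:~R) *: Y a (n - 1) b
}.

Definition homog (V : lmodType K) (Vs : VOA V) (n : int) (a : V) : Prop :=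
  Y Vs (omega Vs) 1 a = n%:~R *: a.

Definition CFT_type (V : lmodType K) (Vs : VOA V) : Prop :=
  (forall n a, n < 0 -> homog Vs n a -> a = 0) /\
  (forall a, homog Vs 0 a -> exists c : K, a = c *: vac Vs).

Definition gradz (M : lmodType K) (Mg : nat -> M -> Prop) (j : int) (x : M) : Prop :=
  match j with Posz n => Mg n x | Negz _ => x = 0 end.

Record admissible_module (V : lmodType K) (Vs : VOA V) (M : lmodType K) := {
  YM : V -> int -> M -> M;
  Mg : nat -> M -> Prop;
  YM_bilin : modes_bilinear YM;
  YM_trunc : truncation YM;
  YM_vac : forall n w, YM (vac Vs) n w = if n == -1 then w else 0;
  YM_borcherds : borcherds (Y Vs) YM;
  Mg_subspace : forall n, subspace (Mg n);
  Mg_span : forall w, exists (k : nat) (ns : 'I_k -> nat) (ws : 'I_k -> M),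
    (forall i, Mg (ns i) (ws i)) /\ w = \sum_(i < k) ws i;
  Mg_indep : forall (k : nat) (ws : 'I_k -> M),
    (forall i : 'I_k, Mg i (ws i)) -> \sum_(i < k) ws i = 0 -> forall i, ws i = 0;
  YM_grad : forall a (k m : int) (n : nat) x, homog Vs k a -> Mg n x ->
    gradz Mg (k - m - 1 + n%:Z) (YM a m x)
}.

Section Module.
Variables (V : lmodType K) (Vs : VOA V) (M : lmodType K) (Ms : admissible_module Vs M).

Definition homogeneous_subspace (W : M -> Prop) : Prop :=
  subspace W /\ forall w, W w -> exists (k : nat) (ns : 'I_k -> nat) (ws : 'I_k -> M),
    (forall i, W (ws i) /\ Mg Ms (ns i) (ws i)) /\ w = \sum_(i < k) ws i.

(* a^1_{-n_1} ... a^k_{-n_k} w for l = [:: (a^1,n_1); ...; (a^k,n_k)] *)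
Definition mode_word (l : seq (V * nat)) (w : M) : M :=
  foldr (fun p x => YM Ms p.1 (- (p.2)%:Z) x) w l.

Definition homog_pos (a : V) : Prop := exists n : int, 1 <= n /\ homog Vs n a.

Definition strongly_generated (W : M -> Prop) : Prop :=
  forall m : M, in_span (fun x => exists (l : seq (V * nat)) (w : M),
      [/\ forall p, p \in l -> homog_pos p.1 /\ (1 <= p.2)%N, W w & x = mode_word l w]) m.

Definition C2M (x : M) : Prop := in_span (fun y => exists a v, y = YM Ms a (-2) v) x.

End Module.
End VOADefs.

(* Borcherds' identity yields three facts about modes on M.  With b = 1 the
   iterate formula gives (a_{-2}1)_{-n} = n a_{-n-1}, so by induction every
   mode a_{-n} with n >= 2 maps M into C_2(M).  The commutator formula shows
   that a_{-1} preserves C_2(M), and the iterate formula gives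
   a_{-1} b_{-1} w = (a_{-1} b)_{-1} w modulo C_2(M).  Hence the span of the
   a_{-1} w (w in W) plus C_2(M) contains W and is stable under all modes
   a_{-n}, n >= 1; by strong generation it is all of M. *)

From HB Require Import structures.
From mathcomp Require Import all_boot all_order all_algebra.
From mathcomp Require Import reals complex.
From mathcomp Require Import boolp zify.
Set Implicit Arguments. Unset Strict Implicit. Unset Printing Implicit Defensive.
Import Order.TTheory GRing.Theory Num.Theory.
Local Open Scope ring_scope.

Section Span.
Variables (K : fieldType) (U : lmodType K) (S : U -> Prop).

Lemma in_span0 : in_span S 0.
Proof. by exists 0%N, (fun _ => 0), (fun _ => 0); split; [case | rewrite big_ord0]. Qed.

Lemma in_span_mem x : S x -> in_span S x.
Proof.
by move=> Sx; exists 1%N, (fun _ => 1), (fun _ => x); rewrite big_ord1 scale1r.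
Qed.

Lemma in_spanZ c x : in_span S x -> in_span S (c *: x).
Proof.
case=> k [d [s [Ss ->]]]; exists k, (fun i => c * d i), s; split=> //.
by rewrite scaler_sumr; apply: eq_bigr => i _; rewrite scalerA.
Qed.

Lemma in_spanD x y : in_span S x -> in_span S y -> in_span S (x + y).
Proof.
case=> k1 [c1 [s1 [Ss1 ->]]] [k2 [c2 [s2 [Ss2 ->]]]].
exists (k1 + k2)%N, (fun i => match split i with inl j => c1 j | inr j => c2 j end),
  (fun i => match split i with inl j => s1 j | inr j => s2 j end).
split; first by move=> i; case: (split i).
rewrite big_split_ord; congr (_ + _); apply: eq_bigr => i _.
  by rewrite (unsplitK (inl i)).
by rewrite (unsplitK (inr i)).
Qed.

Lemma in_spanB x y : in_span S x -> in_span S y -> in_span S (x - y).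
Proof. by move=> Sx Sy; rewrite -scaleN1r; apply/in_spanD/in_spanZ. Qed.

Lemma in_span_sum k (f : 'I_k -> U) :
  (forall i, in_span S (f i)) -> in_span S (\sum_(i < k) f i).
Proof.
elim: k f => [|k IHk] f Sf; first by rewrite big_ord0; apply: in_span0.
by rewrite big_ord_recr; apply: in_spanD => //; apply: IHk.
Qed.

Lemma subspace_in_span : subspace (in_span S).
Proof. by split; [exact: in_span0 | exact: in_spanD | exact: in_spanZ]. Qed.

Lemma in_span_ind (Q : U -> Prop) :
  subspace Q -> (forall x, S x -> Q x) -> forall x, in_span S x -> Q x.
Proof.
case=> Q0 QD QZ SQ x [k [c [s [Ss ->]]]].
elim: k c s Ss => [|k IHk] c s Ss; first by rewrite big_ord0.
by rewrite big_ord_recr; apply: QD; [apply: IHk | apply/QZ/SQ].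
Qed.

End Span.

Lemma gbinom_n0 (K : fieldType) n : gbinom K n 0 = 1.
Proof. by rewrite /gbinom big_ord0 fact0 divr1. Qed.

Lemma gbinom_0n (K : fieldType) i : (0 < i)%N -> gbinom K 0 i = 0.
Proof. by case: i => // i _; rewrite /gbinom big_ord_recl subrr !mul0r. Qed.

Lemma gbinom_neq0 (K : numFieldType) n i : n < 0 -> gbinom K n i != 0.
Proof.
move=> n_lt0; rewrite /gbinom mulf_neq0 ?invr_eq0 ?pnatr_eq0 -?lt0n ?fact_gt0 //.
by apply/prodf_neq0 => j _; rewrite intr_eq0; lia.
Qed.

Section Modes.
Variables (K : fieldType) (V U : lmodType K) (Y : V -> int -> U -> U).
Hypothesis Y_bilin : modes_bilinear Y.

Lemma modeD a n x y : Y a n (x + y) = Y a n x + Y a n y.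
Proof. by rewrite -{1}(scale1r x) (proj2 Y_bilin) scale1r. Qed.

Lemma mode0 a n : Y a n 0 = 0.
Proof. by apply: (addrI (Y a n 0)); rewrite -modeD !addr0. Qed.

Lemma modeZ a n c x : Y a n (c *: x) = c *: Y a n x.
Proof. by rewrite -(addr0 (c *: x)) (proj2 Y_bilin) mode0 addr0. Qed.

Lemma mode0l n x : Y 0 n x = 0.
Proof.
have := (proj1 Y_bilin) 1 0 0 n x; rewrite scale1r addr0 scale1r => Y0D.
by apply: (addrI (Y 0 n x)); rewrite -Y0D addr0.
Qed.

Lemma modeZl c a n x : Y (c *: a) n x = c *: Y a n x.
Proof. by rewrite -(addr0 (c *: a)) (proj1 Y_bilin) mode0l addr0. Qed.

Lemma subspace_mode_preimage a n (Q : U -> Prop) :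
  subspace Q -> subspace (fun x => Q (Y a n x)).
Proof.
case=> Q0 QD QZ; split=> [|x y Qx Qy|c x Qx]; first by rewrite mode0.
  by rewrite modeD; apply: QD.
by rewrite modeZ; apply: QZ.
Qed.

End Modes.

Section C2.
Variables (K : numFieldType) (V : lmodType K) (Vs : VOA V)
  (M : lmodType K) (Ms : admissible_module Vs M).

Local Notation YM := (YM Ms).
Local Notation C2 := (C2M Ms).

Lemma YM_borcherds_ge a b u p q r N0 : exists2 N, (N0 <= N)%N &
  \sum_(i < N) gbinom K p i *: YM (Y Vs a (r + i%:Z) b) (p + q - i%:Z) u =
  \sum_(i < N) ((-1) ^+ i * gbinom K r i) *:
     (YM a (p + r - i%:Z) (YM b (q + i%:Z) u)
      - (-1) ^+ `|r| *: YM b (q + r - i%:Z) (YM a (p + i%:Z) u)).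
Proof.
have [N1 borcherdsN] := YM_borcherds Ms a b u p q r.
by exists (maxn N0 N1); [exact: leq_maxl | apply/borcherdsN/leq_maxr].
Qed.

Lemma YM_commutator a b u p q : exists N,
  YM a p (YM b q u) - YM b q (YM a p u) =
  \sum_(i < N) gbinom K p i *: YM (Y Vs a i%:Z b) (p + q - i%:Z) u.
Proof.
have [[|N] // _ borcherdsN] := YM_borcherds_ge a b u p q 0 1.
rewrite [X in _ = X]big_ord_recl [X in _ = _ + X]big1 in borcherdsN; last first.
  by move=> i _; rewrite gbinom_0n // mulr0 scale0r.
rewrite expr0 mul1r gbinom_n0 !scale1r !(addr0, subr0) in borcherdsN.
by exists N.+1; rewrite -borcherdsN; apply: eq_bigr => i _; rewrite add0r.
Qed.

Lemma YM_iterate a b u q r N0 : exists2 N, (N0 <= N)%N &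
  YM (Y Vs a r b) q u = \sum_(i < N) ((-1) ^+ i * gbinom K r i) *:
     (YM a (r - i%:Z) (YM b (q + i%:Z) u)
      - (-1) ^+ `|r| *: YM b (q + r - i%:Z) (YM a i%:Z u)).
Proof.
have [[|N] // N0_le borcherdsN] := YM_borcherds_ge a b u 0 q r N0.+1.
exists N.+1; first exact: ltnW.
move: borcherdsN; rewrite big_ord_recl big1 => [|i _]; last first.
  by rewrite gbinom_0n // scale0r.
rewrite gbinom_n0 scale1r !(addr0, subr0, add0r) => ->.
by apply: eq_bigr => i _; rewrite !add0r.
Qed.

Lemma YM_vac_translate a u n :
  YM (Y Vs a (-2) (vac Vs)) (- n.+2%:Z) u =
  ((-1) ^+ n.+1 * gbinom K (-2) n.+1) *: YM a (- n.+3%:Z) u.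
Proof.
have [N n2_le ->] := YM_iterate a (vac Vs) u (- n.+2%:Z) (-2) n.+2.
rewrite (bigD1 (Ordinal n2_le)) //= big1 => [|i /eqP i_neq]; last first.
  rewrite !(YM_vac Ms); case: eqP => [?|_].
    by exfalso; apply: i_neq; apply: val_inj => /=; lia.
  by case: eqP => [?|_]; [lia | rewrite (mode0 (YM_bilin Ms)) scaler0 subrr scaler0].
rewrite !(YM_vac Ms); case: eqP => [_|?]; last lia.
case: eqP => [?|_]; first lia.
by rewrite scaler0 subr0 addr0; congr (_ *: YM _ _ _); lia.
Qed.

Lemma C2M_modeN2 a v : C2 (YM a (-2) v).
Proof. by apply: in_span_mem; exists a, v. Qed.

Lemma C2M_mode_leN2 a k u : k <= -2 -> C2 (YM a k u).
Proof.
suff C2_mode n : forall a u, C2 (YM a (- n.+2%:Z) u).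
  by move=> k_le; have -> : k = - (`|k| - 2)%N.+2%:Z by lia.
elim: n => [|n IHn] {}a {}u; first exact: C2M_modeN2.
have c_neq0 : (-1) ^+ n.+1 * gbinom K (-2) n.+1 != 0.
  by rewrite mulf_neq0 ?signr_eq0 ?gbinom_neq0.
by rewrite -[YM a _ u](scalerK c_neq0) -YM_vac_translate; apply/in_spanZ/IHn.
Qed.

Lemma C2M_modeN1_modeN2 a c v : C2 (YM a (-1) (YM c (-2) v)).
Proof.
have [N commN] := YM_commutator a c v (-1) (-2).
rewrite -(subrK (YM c (-2) (YM a (-1) v)) (YM a (-1) _)) commN.
apply: in_spanD; last exact: C2M_modeN2.
by apply: in_span_sum => i; apply/in_spanZ/C2M_mode_leN2; lia.
Qed.

Lemma C2M_modeN1 a c : C2 c -> C2 (YM a (-1) c).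
Proof.
move: c; apply: (in_span_ind (subspace_mode_preimage (YM_bilin Ms) a (-1)
  (subspace_in_span _))).
by move=> _ [b [v ->]]; apply: C2M_modeN1_modeN2.
Qed.

Lemma C2M_modeN1_assoc a b w :
  C2 (YM a (-1) (YM b (-1) w) - YM (Y Vs a (-1) b) (-1) w).
Proof.
have [[|N] // _ ->] := YM_iterate a b w (-1) (-1) 1.
rewrite big_ord_recl /= expr0 mul1r gbinom_n0 scale1r !(addr0, subr0).
rewrite opprD opprB addrA subrKC; apply: in_spanB; first exact/in_spanZ/C2M_modeN2.
apply: in_span_sum => i; rewrite /bump leq0n.
by apply/in_spanZ/in_spanB; [|apply: in_spanZ]; apply: C2M_mode_leN2; lia.
Qed.

Variable W : M -> Prop.

Definition modeN1_image (y : M) : Prop := exists a w, W w /\ y = YM a (-1) w.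

Definition in_span_modC2 (m : M) : Prop :=
  exists2 x, in_span modeN1_image x & C2 (m - x).

Lemma subspace_in_span_modC2 : subspace in_span_modC2.
Proof.
split=> [|x y [x1 Sx1 Cx] [y1 Sy1 Cy]|c x [x1 Sx1 Cx]].
- by exists 0; [exact: in_span0 | rewrite subrr; exact: in_span0].
- exists (x1 + y1); first exact: in_spanD.
  by rewrite opprD addrACA; apply: in_spanD.
- exists (c *: x1); first exact: in_spanZ.
  by rewrite -scalerBr; apply: in_spanZ.
Qed.

Lemma in_span_modC2D_C2M x y : in_span_modC2 x -> C2 y -> in_span_modC2 (x + y).
Proof. by case=> x1 Sx1 Cx Cy; exists x1 => //; rewrite addrAC; apply: in_spanD. Qed.

Lemma in_span_modC2_modeN1 a m : in_span_modC2 m -> in_span_modC2 (YM a (-1) m).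
Proof.
case=> x Sx Cx; rewrite -(subrKC x m) (modeD (YM_bilin Ms)).
apply: in_span_modC2D_C2M (C2M_modeN1 a Cx).
move: {m Cx} x Sx; apply: (in_span_ind (subspace_mode_preimage (YM_bilin Ms) a (-1)
  subspace_in_span_modC2)).
move=> _ [b [w [Ww ->]]]; exists (YM (Y Vs a (-1) b) (-1) w).
  by apply: in_span_mem; exists (Y Vs a (-1) b), w.
exact: C2M_modeN1_assoc.
Qed.

Lemma in_span_modC2_word l w :
  (forall p, p \in l -> (1 <= p.2)%N) -> W w -> in_span_modC2 (mode_word Ms l w).
Proof.
move=> l_ge1 Ww; elim: l l_ge1 => [|[a n] l IHl] l_ge1 /=.
  exists w; last by rewrite subrr; apply: in_span0.
  by apply: in_span_mem; exists (vac Vs), w; rewrite (YM_vac Ms).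
have [->|n_ge2] : n = 1%N \/ (2 <= n)%N by have /= := l_ge1 _ (mem_head _ _); lia.
  by apply/in_span_modC2_modeN1/IHl => p lp; apply: l_ge1; rewrite inE lp orbT.
rewrite -[YM _ _ _]add0r; apply: in_span_modC2D_C2M; last by apply: C2M_mode_leN2; lia.
by case: subspace_in_span_modC2.
Qed.

Lemma in_span_modeN1_imageE x : in_span modeN1_image x ->
  exists k (a : 'I_k -> V) (w : 'I_k -> M),
    (forall i, W (w i)) /\ x = \sum_(i < k) YM (a i) (-1) (w i).
Proof.
case=> k [c [s [s_gen ->]]].
have [a /choice [w aw_gen]] := choice s_gen.
exists k, (fun i => c i *: a i), w; split=> [i|]; first by case: (aw_gen i).
by apply: eq_bigr => i _; rewrite (modeZl (YM_bilin Ms)); case: (aw_gen i) => _ ->.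
Qed.

End C2.

Theorem lemma4p5 (R : realType) (V : lmodType (complex R)) (Vs : VOA V)
    (M : lmodType (complex R)) (Ms : admissible_module Vs M) (W : M -> Prop) :
  CFT_type Vs ->
  homogeneous_subspace Ms W ->
  strongly_generated Ms W ->
  forall m : M, exists (k : nat) (a : 'I_k -> V) (w : 'I_k -> M),
    (forall i, W (w i)) /\ C2M Ms (m - \sum_(i < k) YM Ms (a i) (-1) (w i)).
Proof.
move=> _ _ W_gen m.
have [x /in_span_modeN1_imageE [k [a [w [Ww ->]]]] C2m] : in_span_modC2 Ms W m.
  move: m (W_gen m); apply: (in_span_ind (subspace_in_span_modC2 Ms W)).
  by move=> _ [l [w [l_ge1 Ww ->]]]; apply: in_span_modC2_word => // p /l_ge1 [].
by exists k, a, w.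
Qed.
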